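(* In the setting described in the context, suppose that the path satisfies $\lim_{\ell\to\infty}(\vec n_\ell)_j=\infty$ for every $j=1,\dots,r$. Then for every $\ell\ge0$, $x q_\ell(x)$ is a finite linear combination of the functions $q_0,q_1,\dots$; more precisely, \[ x\,q_\ell(x)=\sum_{k=0}^{\infty}J_{k,\ell}\,q_k(x), \] where only finitely many terms of the sum are nonzero (so multiplication by $x$ maps $\operatorname{span}\{q_k:k\ge0\}$ into itself, with matrix the transpose of $J$).
   Context: Let $r\ge1$ and let $\mu_1,\dots,\mu_r$ be positive Borel measures on $\mathbb{R}$ with all moments finite, forming a perfect system: for every $\vec n\in\mathbb{N}_0^r$ there is a monic polynomial $P_{\vec n}$ of degree $|\vec n|=n_1+\dots+n_r$ with $\int x^kP_{\vec n}\,d\mu_j=0$ for $0\le k\le n_j-1$, $1\le j\le r$. The type I multiple orthogonal polynomials $A_{\vec n}=(A_{\vec n,1},\dots,A_{\vec n,r})$ are defined by $\deg A_{\vec n,j}\le n_j-1$, $\sum_{j}\int x^kA_{\vec n,j}\,d\mu_j=0$ for $0\le k\le|\vec n|-2$ and $\sum_j\int x^{|\vec n|-1}A_{\vec n,j}\,d\mu_j=1$ (they exist uniquely for perfect systems). Let $\mu$ be a positive measure with $\mu_j\ll\mu$ for all $j$, $w_j=d\mu_j/d\mu$, and $Q_{\vec n}=\sum_{j=1}^rA_{\vec n,j}w_j$. Fix a path $(\vec n_\ell)_{\ell\ge0}$ with $|\vec n_\ell|=\ell$ and $\vec n_{\ell+1}=\vec n_\ell+\vec e_{i_\ell}$ ($\vec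 e_j$ the $j$-th unit vector, $i_\ell\in\{1,\dots,r\}$), and set $p_\ell=P_{\vec n_\ell}$, $q_\ell=Q_{\vec n_{\ell+1}}$; these satisfy $\int p_\ell q_{\ell'}\,d\mu=\delta_{\ell,\ell'}$. The matrix $J=[J_{\ell,k}]_{\ell,k\ge0}$ is defined by $xp_\ell=\sum_{k=0}^{\ell+1}J_{\ell,k}p_k$, with $J_{\ell,k}=0$ for $k>\ell+1$. *)

From HB Require Import structures.
From mathcomp Require Import all_boot all_order all_algebra.
From mathcomp Require Import all_classical all_reals all_analysis.
Set Implicit Arguments. Unset Strict Implicit. Unset Printing Implicit Defensive.
Import Order.TTheory GRing.Theory Num.Theory.
Local Open Scope ring_scope.

Definition mindex (r : nat) := {ffun 'I_r -> nat}.

Definition mabs (r : nat) (n : mindex r) : nat := (\sum_(j < r) n j)%N.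

Definition madd_unit (r : nat) (n : mindex r) (i : 'I_r) : mindex r :=
  [ffun j => (n j + (j == i))%N].

Section Defs.
Variables (R : realType) (r : nat).

Definition all_moments_finite (mu : {measure set R -> \bar R}) : Prop :=
  forall k : nat, mu.-integrable setT (fun x : R => (x ^+ k)%:E).

Definition typeII_orth (mus : 'I_r -> {measure set R -> \bar R})
    (n : mindex r) (P : {poly R}) : Prop :=
  forall (j : 'I_r) (k : nat), (k < n j)%N ->
    (\int[mus j]_(x in setT) ((x ^+ k * P.[x])%:E) = 0)%E.

Definition typeII (mus : 'I_r -> {measure set R -> \bar R})
    (n : mindex r) (P : {poly R}) : Prop :=
  P \is monic /\ size P = (mabs n).+1 /\ typeII_orth mus n P.

Definition perfect_system (mus : 'I_r -> {measure set R -> \bar R}) : Prop :=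
  forall n : mindex r, exists! P : {poly R}, typeII mus n P.

Definition typeI (mus : 'I_r -> {measure set R -> \bar R})
    (n : mindex r) (A : 'I_r -> {poly R}) : Prop :=
  (forall j : 'I_r, (size (A j) <= n j)%N) /\
  (forall k : nat, (k.+2 <= mabs n)%N ->
     (\sum_(j < r) \int[mus j]_(x in setT) ((x ^+ k * (A j).[x])%:E) = 0)%E) /\
  (\sum_(j < r) \int[mus j]_(x in setT) ((x ^+ (mabs n).-1 * (A j).[x])%:E)
     = 1)%E.

Definition is_density (mu nu : {measure set R -> \bar R}) (w : R -> R) : Prop :=
  measurable_fun setT w /\ (forall x, 0 <= w x) /\
  forall A : set R, measurable A -> nu A = (\int[mu]_(x in A) (w x)%:E)%E.

Definition typeI_fun (A : 'I_r -> {poly R}) (w : 'I_r -> R -> R) (x : R) : R :=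
  \sum_(j < r) (A j).[x] * w j x.

Definition is_path (n : nat -> mindex r) (i : nat -> 'I_r) : Prop :=
  (forall l, mabs (n l) = l) /\ (forall l, n l.+1 = madd_unit (n l) (i l)).
End Defs.

From HB Require Import structures.
From mathcomp Require Import all_boot all_order all_algebra.
From mathcomp Require Import all_classical all_reals all_analysis.
Import Order.TTheory GRing.Theory Num.Theory.
Local Open Scope ring_scope.
Set Implicit Arguments. Unset Strict Implicit.

(* With the bilinear form <p, B> = sum_j int p B_j dmu_j, the type II
   polynomials P_{n_k} and the type I vectors A_{n_{m+1}} are biorthogonal.
   As n_{N+1} exceeds n_N by one unit in a single coordinate, induction on N
   shows that every vector B with deg B_j < (n_N)_j equals
   sum_{m<N} <P_{n_m}, B> A_{n_{m+1}}.  Since all coordinates of n_N tend to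
   infinity, x A_{n_{l+1}} is such a vector for N large, and its coefficients
   are <P_{n_m}, x A_{n_{l+1}}> = <x P_{n_m}, A_{n_{l+1}}> = J_{m,l} by the
   recurrence for x p_m.  Multiplying by the weights w_j and summing over j
   gives x q_l = sum_k J_{k,l} q_k. *)

Section Pairing.
Variables (R : comNzRingType) (r : nat).

Definition moment_functional (m : nat -> R) (p : {poly R}) : R :=
  \sum_(k < size p) p`_k * m k.

Lemma moment_functional_widen m (p : {poly R}) N :
  (size p <= N)%N -> moment_functional m p = \sum_(k < N) p`_k * m k.
Proof.
move=> pN; rewrite /moment_functional (big_ord_widen N (fun k => p`_k * m k) pN).
rewrite [RHS](bigID (fun k : 'I_N => (k < size p)%N)) /=.
rewrite [X in _ = _ + X]big1 ?addr0 //.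
by move=> k; rewrite -leqNgt => /(nth_default 0) ->; rewrite mul0r.
Qed.

Fact moment_functional_is_linear m : scalar (moment_functional m).
Proof.
move=> a p q; pose N := maxn (size (a *: p + q)) (maxn (size p) (size q)).
have sN : (size (a *: p + q)%R <= N)%N by rewrite leq_maxl.
have pN : (size p <= N)%N by rewrite /N maxnCA leq_maxl.
have qN : (size q <= N)%N by rewrite /N maxnA leq_maxr.
rewrite (moment_functional_widen _ sN) (moment_functional_widen _ pN).
rewrite (moment_functional_widen _ qN).
rewrite big_distrr -big_split /=; apply: eq_bigr => k _.
by rewrite coefD coefZ mulrDl mulrA.
Qed.

HB.instance Definition _ m := GRing.isLinear.Build R {poly R} R *%R
  (moment_functional m) (moment_functional_is_linear m).

(* For the moment sequences of mu_1, ..., mu_r, [pairing m p B] is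
   sum_j int p B_j dmu_j, i.e. int p Q dmu for Q = sum_j B_j w_j. *)
Definition pairing (m : 'I_r -> nat -> R) (p : {poly R})
    (B : 'I_r -> {poly R}) : R :=
  \sum_(j < r) moment_functional (m j) (p * B j).

Variable m : 'I_r -> nat -> R.

Fact pairing_is_linear p : scalar (pairing m p).
Proof.
move=> a B C; rewrite /pairing big_distrr -big_split /=; apply: eq_bigr => j _.
by rewrite !fctE mulrDr -scalerAr linearP.
Qed.

HB.instance Definition _ p := GRing.isLinear.Build R ('I_r -> {poly R}) R *%R
  (pairing m p) (pairing_is_linear p).

Lemma pairingZl a p B : pairing m (a *: p) B = a * pairing m p B.
Proof.
by rewrite /pairing mulr_sumr; apply: eq_bigr => j _; rewrite -scalerAl linearZ.
Qed.

Lemma pairing_suml I (s : seq I) (Q : pred I) (G : I -> {poly R}) B :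
  pairing m (\sum_(i <- s | Q i) G i) B = \sum_(i <- s | Q i) pairing m (G i) B.
Proof.
rewrite /pairing exchange_big /=; apply: eq_bigr => j _.
by rewrite mulr_suml linear_sum.
Qed.

Lemma pairing_coef p B :
  pairing m p B = \sum_(k < size p) p`_k * pairing m 'X^k B.
Proof.
rewrite -{1}[p]coefK poly_def pairing_suml.
by apply: eq_bigr => k _; rewrite pairingZl.
Qed.

Lemma pairingXr p B : pairing m p (fun j => 'X * B j) = pairing m ('X * p) B.
Proof. by apply: eq_bigr => j _; rewrite mulrCA mulrA. Qed.

End Pairing.

Definition sizes_le (R : nzRingType) r (d : mindex r) (B : 'I_r -> {poly R}) :=
  forall j, (size (B j) <= d j)%N.

Lemma sizes_leB (R : nzRingType) r (d : mindex r) (B C : 'I_r -> {poly R}) a :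
  sizes_le d B -> sizes_le d C -> sizes_le d (B - a *: C).
Proof.
move=> hB hC j; rewrite (leq_trans (size_polyD _ _)) // geq_max hB size_polyN.
exact: leq_trans (size_scale_leq _ _) (hC j).
Qed.

Lemma size_leq_coef0 (R : nzRingType) (p : {poly R}) d :
  (size p <= d.+1)%N -> p`_d = 0 -> (size p <= d)%N.
Proof.
rewrite leq_eqVlt ltnS => /predU1P[pd pd0|//].
have /eqP : lead_coef p = 0 by rewrite lead_coefE pd.
by rewrite lead_coef_eq0 => /eqP ->; rewrite size_poly0.
Qed.

Section MultipleOrthogonality.
Variables (F : fieldType) (r : nat) (m : 'I_r -> nat -> F).
Variables (n : nat -> mindex r) (i : nat -> 'I_r).
Hypothesis n0 : forall j, n 0%N j = 0%N.
Hypothesis nS : forall l j, n l.+1 j = (n l j + (j == i l))%N.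

Lemma leq_path j a b : (a <= b)%N -> (n a j <= n b j)%N.
Proof.
move=> /subnK <-; elim: (b - a)%N => [//|c IH].
by rewrite addSn nS (leq_trans IH) ?leq_addr.
Qed.

Lemma sizes_le_path a b (B : 'I_r -> {poly F}) :
  (a <= b)%N -> sizes_le (n a) B -> sizes_le (n b) B.
Proof. by move=> ab hB j; rewrite (leq_trans (hB j)) ?leq_path. Qed.

Lemma sizes_le_step N (B : 'I_r -> {poly F}) :
  sizes_le (n N.+1) B -> (B (i N))`_(n N (i N)) = 0 -> sizes_le (n N) B.
Proof.
move=> hB B0 j; have := hB j; rewrite nS.
by case: eqP => [->|_]; rewrite ?addn0 ?addn1 // => /size_leq_coef0; apply.
Qed.

(* [P l] stands for P_{n_l} and [A l] for the type I vector A_{n_{l+1}}. *)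
Variables (P : nat -> {poly F}) (A : nat -> 'I_r -> {poly F}).
Hypothesis P_monic : forall l, P l \is monic.
Hypothesis size_P : forall l, size (P l) = l.+1.
Hypothesis P_orth : forall l j k, (k < n l j)%N ->
  moment_functional (m j) ('X^k * P l) = 0.
Hypothesis size_A : forall l, sizes_le (n l.+1) (A l).
Hypothesis A_orth : forall l k, (k < l)%N -> pairing m 'X^k (A l) = 0.
Hypothesis A_norm : forall l, pairing m 'X^l (A l) = 1.

Lemma moment_functional_mul_P l j (p : {poly F}) : (size p <= n l j)%N ->
  moment_functional (m j) (p * P l) = 0.
Proof.
move=> pl; rewrite -[p]coefK poly_def mulr_suml linear_sum big1 // => k _.
by rewrite -scalerAl linearZ /= P_orth ?mulr0 // (leq_trans _ pl).
Qed.

Lemma pairing_P_eq0 k (B : 'I_r -> {poly F}) :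
  sizes_le (n k) B -> pairing m (P k) B = 0.
Proof.
by move=> hB; apply: big1 => j _; rewrite mulrC moment_functional_mul_P.
Qed.

Lemma pairing_A_eq0 l (p : {poly F}) : (size p <= l)%N -> pairing m p (A l) = 0.
Proof.
move=> pl; rewrite pairing_coef big1 // => k _.
by rewrite A_orth ?mulr0 // (leq_trans _ pl).
Qed.

Lemma pairing_P_A k l : pairing m (P k) (A l) = (k == l)%:R.
Proof.
case: (ltngtP k l) => [kl|lk|<-].
- by rewrite pairing_A_eq0 ?size_P.
- by rewrite pairing_P_eq0 //; exact: sizes_le_path lk (size_A l).
rewrite pairing_coef size_P big_ord_recr /= big1 => [|j _]; last first.
  by rewrite A_orth ?mulr0.
have := P_monic k; rewrite monicE lead_coefE size_P => /eqP ->.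
by rewrite A_norm add0r mulr1.
Qed.

Lemma sizes_le_expansion N (B : 'I_r -> {poly F}) : sizes_le (n N) B ->
  B = \sum_(k < N) pairing m (P k) B *: A k.
Proof.
elim: N B => [|N IH] B hB.
  rewrite big_ord0; apply/funext => j; apply/eqP.
  by rewrite -size_poly_leq0 -(n0 j) hB.
set i0 := i N; set d := n N i0.
(* A N has a nonzero coefficient in the single slot that n N.+1 adds to n N,
   for otherwise it would be orthogonal to P N. *)
have A_coef : (A N i0)`_d != 0.
  apply/eqP => A0; have := pairing_P_A N N.
  rewrite pairing_P_eq0 ?eqxx; last exact: sizes_le_step.
  by move/eqP; rewrite eq_sym oner_eq0.
set s := (B i0)`_d / (A N i0)`_d.
have hC : sizes_le (n N) (B - s *: A N).
  apply: sizes_le_step; first exact: sizes_leB.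
  by rewrite !fctE coefB coefZ divfK ?subrr.
have PN_B : pairing m (P N) B = s.
  apply/eqP; rewrite -subr_eq0; have := pairing_P_eq0 hC.
  by rewrite linearB linearZ /= pairing_P_A eqxx mulr1 => ->.
rewrite big_ord_recr /= PN_B -[B in LHS](subrK (s *: A N)) (IH _ hC).
congr (_ + _); apply: eq_bigr => k _; rewrite linearB linearZ /= pairing_P_A.
by rewrite (ltn_eqF (ltn_ord k)) mulr0 subr0.
Qed.

Variable J : nat -> nat -> F.
Hypothesis XP_expansion : forall l, 'X * P l = \sum_(k < l.+2) J l k *: P k.
Hypothesis J_eq0 : forall l k, (l.+1 < k)%N -> J l k = 0.

Lemma pairing_XP_A k l : pairing m ('X * P k) (A l) = J k l.
Proof.
rewrite XP_expansion pairing_suml.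
under eq_bigr do rewrite pairingZl pairing_P_A mulr_natr mulrb.
rewrite -big_mkcond big_ord1_eq; case: ltnP => // kl.
by rewrite J_eq0.
Qed.

Lemma XA_expansion l N : (forall j, n l.+1 j < n N j)%N ->
  (forall k, (N <= k)%N -> J k l = 0) /\
  (fun j => 'X * A l j) = \sum_(k < N) J k l *: A k.
Proof.
move=> lN; have XA_le : sizes_le (n N) (fun j => 'X * A l j).
  move=> j; rewrite (leq_trans (size_mul_leq _ _)) // size_polyX.
  exact: leq_ltn_trans (size_A l j) (lN j).
split=> [k Nk|].
  rewrite -pairing_XP_A -pairingXr pairing_P_eq0 //.
  exact: sizes_le_path Nk XA_le.
rewrite {1}(sizes_le_expansion XA_le); apply: eq_bigr => k _.
by rewrite pairingXr pairing_XP_A.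
Qed.

End MultipleOrthogonality.

Section PolynomialIntegrals.
Variables (R : realType) (mu : {measure set R -> \bar R}).

Definition moment k : R := fine (\int[mu]_(x in setT) (x ^+ k)%:E)%E.

Hypothesis mu_moments : all_moments_finite mu.

Lemma integral_poly (p : {poly R}) :
  (\int[mu]_(x in setT) (p.[x])%:E = (moment_functional moment p)%:E)%E.
Proof.
have monomial_integrable k : mu.-integrable setT (fun x => (p`_k * x ^+ k)%:E).
  by under eq_fun do rewrite EFinM; exact: integrableZl.
under eq_integral do rewrite horner_coef -sumEFin.
rewrite integral_sum // -sumEFin; apply: eq_bigr => k _.
under eq_integral do rewrite EFinM.
by rewrite integralZl // EFinM fineK // integrable_fin_num.
Qed.

Lemma integral_Xn_mul_poly k (p : {poly R}) :
  (\int[mu]_(x in setT) (x ^+ k * p.[x])%:E =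
   (moment_functional moment ('X^k * p))%:E)%E.
Proof.
by under eq_integral do rewrite -hornerXn -hornerM; exact: integral_poly.
Qed.

End PolynomialIntegrals.

Lemma integral_pairing (R : realType) r
    (mus : 'I_r -> {measure set R -> \bar R})
    (mus_moments : forall j, all_moments_finite (mus j))
    k (B : 'I_r -> {poly R}) :
  (\sum_(j < r) \int[mus j]_(x in setT) (x ^+ k * (B j).[x])%:E =
   (pairing (fun j => moment (mus j)) 'X^k B)%:E)%E.
Proof.
by rewrite /pairing -sumEFin; apply: eq_bigr => j _; rewrite integral_Xn_mul_poly.
Qed.

Lemma typeI_fun_sum (R : realType) r N (c : nat -> R)
    (B : nat -> 'I_r -> {poly R}) (w : 'I_r -> R -> R) x :
  typeI_fun (\sum_(k < N) c k *: B k) w x =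
  \sum_(k < N) c k * typeI_fun (B k) w x.
Proof.
rewrite /typeI_fun; under eq_bigr do rewrite fct_sumE horner_sum mulr_suml.
rewrite exchange_big /=; apply: eq_bigr => k _; rewrite mulr_sumr.
by apply: eq_bigr => j _; rewrite !fctE hornerZ mulrA.
Qed.

Lemma typeI_funXl (R : realType) r (B : 'I_r -> {poly R}) (w : 'I_r -> R -> R)
    x :
  typeI_fun (fun j => 'X * B j) w x = x * typeI_fun B w x.
Proof.
rewrite /typeI_fun mulr_sumr; apply: eq_bigr => j _.
by rewrite hornerM hornerX mulrA.
Qed.

Section Paths.
Variables (r : nat) (n : nat -> mindex r) (i : nat -> 'I_r).
Hypothesis n_path : is_path n i.

Lemma is_path_start j : n 0%N j = 0%N.
Proof.
by have /eqP := n_path.1 0%N; rewrite sum_nat_eq0 => /forallP /(_ j) /eqP.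
Qed.

Lemma is_path_succ l j : n l.+1 j = (n l j + (j == i l))%N.
Proof. by rewrite n_path.2 ffunE. Qed.

End Paths.

Lemma unbounded_mindex_gt r (n : nat -> mindex r) :
  (forall j M, exists L, forall l, (L <= l)%N -> (M <= n l j)%N) ->
  forall d : mindex r, exists N, forall j, (d j < n N j)%N.
Proof.
move=> n_unbounded d.
have [L hL] := fin_all_exists (fun j => n_unbounded j (d j).+1).
by exists (\max_j L j) => j; apply/hL/leq_bigmax.
Qed.

Theorem proposition2 (R : realType) (r : nat) (hr : (0 < r)%N)
  (mus : 'I_r -> {measure set R -> \bar R})
  (hmom : forall j, all_moments_finite (mus j))
  (hperf : perfect_system mus)
  (mu : {measure set R -> \bar R}) (w : 'I_r -> R -> R)
  (hw : forall j, is_density mu (mus j) (w j))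
  (P : mindex r -> {poly R}) (hP : forall n, typeII mus n (P n))
  (A : mindex r -> 'I_r -> {poly R})
  (hA : forall n, (0 < mabs n)%N -> typeI mus n (A n))
  (n : nat -> mindex r) (i : nat -> 'I_r) (hpath : is_path n i)
  (hinf : forall (j : 'I_r) (M : nat), exists L, forall l, (L <= l)%N -> (M <= n l j)%N)
  (J : nat -> nat -> R)
  (hJ : forall l, 'X * P (n l) = \sum_(k < l.+2) J l k *: P (n k))
  (hJ0 : forall l k, (l.+1 < k)%N -> J l k = 0) :
  let q := fun l => typeI_fun (A (n l.+1)) w in
  forall l : nat, exists N : nat,
    (forall k, (N <= k)%N -> J k l = 0) /\
    forall x : R, x * q l x = \sum_(k < N) J k l * q k x.
Proof.
move=> q l; pose m j := moment (mus j).
have [size_n _] := hpath.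
have A_typeI k : typeI mus (n k.+1) (A (n k.+1)) by apply: hA; rewrite size_n.
have P_monic k : P (n k) \is monic := (hP (n k)).1.
have size_P k : size (P (n k)) = k.+1.
  by case: (hP (n k)) => _ [-> _]; rewrite size_n.
have P_orth k j a :
    (a < n k j)%N -> moment_functional (m j) ('X^a * P (n k)) = 0.
  move=> ak; have := (hP (n k)).2.2 j a ak.
  by rewrite integral_Xn_mul_poly // => -[].
have size_A k : sizes_le (n k.+1) (A (n k.+1)) := (A_typeI k).1.
have A_orth k a : (a < k)%N -> pairing m 'X^a (A (n k.+1)) = 0.
  move=> ak; have := (A_typeI k).2.1 a.
  by rewrite size_n integral_pairing // => /(_ ak) [].
have A_norm k : pairing m 'X^k (A (n k.+1)) = 1.
  by have := (A_typeI k).2.2; rewrite size_n integral_pairing // => -[].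
have [N lN] := unbounded_mindex_gt hinf (n l.+1).
have [J_eq0 XA_eq] := XA_expansion (is_path_start hpath) (is_path_succ hpath)
  P_monic size_P P_orth size_A A_orth A_norm hJ hJ0 lN.
exists N; split=> // x.
rewrite /q -typeI_funXl XA_eq.
exact: typeI_fun_sum N (fun k => J k l) (fun k => A (n k.+1)) w x.
Qed.
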